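(* Let $\mathcal A,\mathcal B$ be nondeterministic parity tree automata over $\Sigma$ (all states productive) with $L(\mathcal A)\cap L(\mathcal B)=\emptyset$. Then there is a function $\mathcal P:\bigcup_{a\in\Sigma}\Delta^\mathcal A(a)\times\Delta^\mathcal B(a)\to\{\mathsf L,\mathsf R\}$ with the following property: for every path $b=(a_0,d_0)(a_1,d_1)\cdots\in(\Sigma\times\{\mathsf L,\mathsf R\})^\omega$ and all sequences $\vec\delta^\mathcal A=\delta^\mathcal A_0\delta^\mathcal A_1\cdots\in\Delta^\mathcal A(b)$ and $\vec\delta^\mathcal B=\delta^\mathcal B_0\delta^\mathcal B_1\cdots\in\Delta^\mathcal B(b)$, if $\mathcal P(\delta^\mathcal A_i,\delta^\mathcal B_i)=d_i$ for every $i\in\omega$, then at least one of $\vec\delta^\mathcal A$, $\vec\delta^\mathcal B$ is rejecting.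
   Context: A nondeterministic parity tree automaton $(\Sigma,Q,q_0,\Omega,\Delta)$ has $\Omega:Q\to\mathbb N$ and $\Delta\subseteq Q\times\Sigma\times Q\times Q$; it accepts a tree $t:\{\mathsf L,\mathsf R\}^*\to\Sigma$ if there is a run $\rho$ with $\rho(\epsilon)=q_0$, $(\rho(u),t(u),\rho(u\mathsf L),\rho(u\mathsf R))\in\Delta$ for all $u$, such that on every branch the maximal priority seen infinitely often is even. $L(\cdot)$ is the recognised language; all states are assumed productive (each state accepts some tree when used as initial state). $\Delta(a)$ is the set of transitions over letter $a$. The priority of a transition $(q,a,q_\mathsf L,q_\mathsf R)$ is $\Omega(q)$; an infinite sequence of transitions is accepting iff the maximal priority occurring infinitely often is even, and rejecting otherwise. For a path $b=(a_0,d_0)(a_1,d_1)\cdots$, $\Delta(b)$ is the set of sequences $\delta_0\delta_1\cdots$ with $\delta_i=(q_i,a_i,q_{\mathsf L,i},q_{\mathsf R,i})\in\Delta$, $q_0$ the initial state, and $q_{i+1}=q_{d_i,i}$ for all $i$. *)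

From mathcomp Require Import all_boot.
Set Implicit Arguments. Unset Strict Implicit. Unset Printing Implicit Defensive.

Inductive dir := DL | DR.

Record npta (Sigma : finType) := NPTA {
  state : finType;
  init : state;
  prio : state -> nat;
  delta : state -> Sigma -> state -> state -> Prop
}.

Definition parity_accepting (f : nat -> nat) : Prop :=
  exists m, ~~ odd m /\ (forall N, exists i, N <= i /\ f i = m)
            /\ (exists N, forall i, N <= i -> f i <= m).

Definition tree (Sigma : Type) := seq dir -> Sigma.

Definition is_run Sigma (A : npta Sigma) (q : state A) (t : tree Sigma)
  (rho : seq dir -> state A) : Prop :=
  rho [::] = q /\
  forall u, delta (rho u) (t u) (rho (rcons u DL)) (rho (rcons u DR)).

Definition accepting_run Sigma (A : npta Sigma) (rho : seq dir -> state A) : Prop :=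
  forall beta : nat -> dir,
    parity_accepting (fun n => prio (rho (mkseq beta n))).

Definition accepts_from Sigma (A : npta Sigma) (q : state A) (t : tree Sigma) : Prop :=
  exists rho, is_run q t rho /\ accepting_run rho.

Definition accepts Sigma (A : npta Sigma) (t : tree Sigma) : Prop :=
  accepts_from (init A) t.

Definition all_productive Sigma (A : npta Sigma) : Prop :=
  forall q : state A, exists t, accepts_from q t.

Record trans Sigma (A : npta Sigma) := Trans {
  tsrc : state A; tlet : Sigma; tL : state A; tR : state A }.

Definition trans_prio Sigma (A : npta Sigma) (d : trans A) : nat := prio (tsrc d).

Definition delta_seq Sigma (A : npta Sigma) (b : nat -> Sigma * dir)
  (ds : nat -> trans A) : Prop :=
  tsrc (ds 0) = init A /\
  forall i,
    delta (tsrc (ds i)) (tlet (ds i)) (tL (ds i)) (tR (ds i)) /\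
    tlet (ds i) = (b i).1 /\
    tsrc (ds i.+1) = (if (b i).2 is DL then tL (ds i) else tR (ds i)).

Definition trans_seq_accepting Sigma (A : npta Sigma) (ds : nat -> trans A) : Prop :=
  parity_accepting (fun i => trans_prio (ds i)).

Definition trans_seq_rejecting Sigma (A : npta Sigma) (ds : nat -> trans A) : Prop :=
  ~ trans_seq_accepting ds.

(* We
   consider the game in which Adam, at a pair of states, plays a pair of
   transitions over a common letter and Eve answers with a direction; Adam
   wins a play when both parity conditions hold.  A winning strategy of Adam
   from the initial states builds a tree accepted by both automata, so by
   disjointness Adam cannot win, and P is a positional winning strategy of Eve.

   The core is a half-positional determinacy theorem for games with finitely
   many moves whose objective for Adam is prefix-independent and closed under
   interleaving (as conjunctions of parity conditions are): Eve has one
   positional strategy winning from every position Adam does not win.  It is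
   proved by induction on the moves at which Eve's choice is not yet fixed,
   combining two strategies of Adam into one along interleaved plays. *)

From mathcomp Require Import all_boot zify.
From Stdlib Require Import ClassicalEpsilon Classical.
From Stdlib Require List.
Set Implicit Arguments. Unset Strict Implicit. Unset Printing Implicit Defensive.

(* [interleaves p q1 q2]: the sequence p is obtained by merging the sequences
   q1 and q2; c1 n and c2 n are the indices of q1 and q2 reached at time n. *)
Definition interleaves (T : Type) (p q1 q2 : nat -> T) : Prop :=
  exists c1 c2 : nat -> nat,
  [/\ forall n, p n = q1 (c1 n) \/ p n = q2 (c2 n),
      forall K, exists N, forall n, N <= n -> K <= c1 n /\ K <= c2 n,
      forall k, exists n, k <= n /\ p n = q1 k.+1 &
      forall k, exists n, k <= n /\ p n = q2 k.+1].

Lemma interleaves_map (T U : Type) (f : T -> U) (p q1 q2 : nat -> T) :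
  interleaves p q1 q2 ->
  interleaves (fun n => f (p n)) (fun n => f (q1 n)) (fun n => f (q2 n)).
Proof.
case=> c1 [c2 [Hp Hc H1 H2]]; exists c1, c2; split=> //.
- by move=> n; case: (Hp n) => E; [left | right]; rewrite E.
- by move=> k; have [n [kn E]] := H1 k; exists n; rewrite E.
- by move=> k; have [n [kn E]] := H2 k; exists n; rewrite E.
Qed.

Lemma interleaves_self (T : Type) (p q : nat -> T) :
  (forall n, p n = q n) -> interleaves p q q.
Proof.
move=> E; exists id, id; split=> /=.
- by move=> n; left.
- by move=> K; exists K.
- by move=> k; exists k.+1; rewrite E.
- by move=> k; exists k.+1; rewrite E.
Qed.

Lemma parity_accepting_shift (f : nat -> nat) c :
  parity_accepting (fun k => f (k + c)) <-> parity_accepting f.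
Proof.
split=> -[m [em [io [N ev]]]]; exists m; split=> //; split.
- by move=> N'; have [i [Hi fi]] := io N'; exists (i + c); split=> //; lia.
- exists (N + c) => i Hi; have := ev (i - c); rewrite subnK; last lia.
  by apply; lia.
- move=> N'; have [i [Hi fi]] := io (N' + c); exists (i - c); split; first lia.
  by rewrite subnK //; lia.
- by exists N => i Hi; apply: ev; lia.
Qed.

(* Parity conditions are closed under interleaving: the largest priority seen
   infinitely often in the merge is the larger of the two such priorities. *)
Lemma parity_accepting_interleaves (f g1 g2 : nat -> nat) :
  interleaves f g1 g2 ->
  parity_accepting g1 -> parity_accepting g2 -> parity_accepting f.
Proof.
move=> [c1 [c2 [Hf Hc H1 H2]]] [m1 [em1 [io1 [N1 ev1]]]] [m2 [em2 [io2 [N2 ev2]]]].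
have Hev : exists N, forall i, N <= i -> f i <= maxn m1 m2.
  have [N HN] := Hc (maxn N1 N2); exists N => i Hi.
  have [c1i c2i] := HN i Hi.
  case: (Hf i) => ->.
  - by apply: leq_trans (ev1 _ _) (leq_maxl _ _); lia.
  - by apply: leq_trans (ev2 _ _) (leq_maxr _ _); lia.
case: (leqP m1 m2) => hm.
- exists m2; split=> //; split; last first.
    by case: Hev => N HN; exists N => i /HN; rewrite (maxn_idPr hm).
  move=> N; have [[|k] [Hk gk]] := io2 N.+1; first by [].
  have [n [Hn fn]] := H2 k.
  by exists n; split; [lia | rewrite fn].
- exists m1; split=> //; split; last first.
    by case: Hev => N HN; exists N => i /HN; rewrite (maxn_idPl (ltnW hm)).
  move=> N; have [[|k] [Hk gk]] := io1 N.+1; first by [].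
  have [n [Hn fn]] := H1 k.
  by exists n; split; [lia | rewrite fn].
Qed.

Lemma eventually_not (P : nat -> bool) :
  ~ (forall N, exists n, N <= n /\ P n) -> exists N, forall n, N <= n -> ~~ P n.
Proof.
move=> nP; apply: NNPP => nE; apply: nP => N; apply: NNPP => nn; apply: nE.
by exists N => n Nn; apply/negP => Pn; apply: nn; exists n.
Qed.

(* A sequence of histories L that at each step either stays put or grows by one
   direction, and grows infinitely often, is a "stuttering" version of a strictly
   growing sequence H: L n = H (size (L n)). *)
Section StutteringGrowth.
Variables (L : nat -> seq dir) (grows : nat -> bool).
Hypothesis L0 : L 0 = [::].
Hypothesis L_step : forall n, exists d, L n.+1 = if grows n.+1 then d :: L n else L n.
Hypothesis grows_inf : forall N, exists n, N <= n /\ grows n.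

Lemma size_growth_step n : size (L n.+1) = size (L n) + grows n.+1.
Proof.
by have [d ->] := L_step n; case: (grows n.+1); rewrite /= ?addn1 ?addn0.
Qed.

Lemma size_growth_mono n m : n <= m -> size (L n) <= size (L m).
Proof.
move=> /subnK <-; elim: (m - n) => [|k IH] //=.
by rewrite addSn size_growth_step; apply: leq_trans IH (leq_addr _ _).
Qed.

Lemma size_growth_le n : size (L n) <= n.
Proof. by elim: n => [|n IH]; rewrite ?L0 // size_growth_step; case: (grows n.+1); lia. Qed.

Lemma growth_suffix n m :
  n <= m -> L n = drop (size (L m) - size (L n)) (L m).
Proof.
move=> /subnK <-; elim: (m - n) => [|k IH]; first by rewrite add0n subnn drop0.
rewrite addSn; have [d E] := L_step (k + n); rewrite E.
case: (grows (k + n).+1) => /=; last exact: IH.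
by rewrite subSn // size_growth_mono // leq_addl.
Qed.

Lemma growth_eq_of_size n m : size (L n) = size (L m) -> L n = L m.
Proof.
move=> E; case: (leqP n m) => nm.
  by rewrite (growth_suffix nm) E subnn drop0.
by rewrite (growth_suffix (ltnW nm)) E subnn drop0.
Qed.

Lemma size_growth_unbounded K : exists N, forall n, N <= n -> K <= size (L n).
Proof.
suff [n Hn] : exists n, K <= size (L n).
  by exists n => m nm; exact: leq_trans Hn (size_growth_mono nm).
elim: K => [|K [n Hn]]; first by exists 0.
have [[|n'] [Hn' i']] := grows_inf n.+1 => //.
exists n'.+1; rewrite (size_growth_step n') i' addn1 ltnS.
by apply: leq_trans Hn (size_growth_mono _); lia.
Qed.

Lemma size_growth_hit m k : k < size (L m) ->
  exists n, [/\ n < m, size (L n) = k, grows n.+1 & size (L n.+1) = k.+1].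
Proof.
elim: m => [|m IH]; first by rewrite L0.
case: (ltnP k (size (L m))) => hk.
  by case/IH: hk => n [? ? ? ?]; exists n; split=> //; lia.
rewrite size_growth_step => hk'.
have gm : grows m.+1 by move: hk'; case: (grows m.+1); rewrite ?addn0 //; lia.
exists m; split=> //; first lia.
by rewrite (size_growth_step m) gm addn1; congr S; lia.
Qed.

Lemma growth_reindex : exists H : nat -> seq dir,
  [/\ H 0 = [::], (forall k, exists d, H k.+1 = d :: H k),
      (forall n, L n = H (size (L n))),
      (forall k, exists n, [/\ k <= n, grows n.+1 & L n.+1 = H k.+1]) &
      (forall K, exists N, forall n, N <= n -> K <= size (L n))].
Proof.
have exk k : exists n, size (L n) == k.
  have [N HN] := size_growth_unbounded k.+1.
  by have [n [_ Hn _ _]] := size_growth_hit (HN N (leqnn N)); exists n; apply/eqP.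
pose H k := L (xchoose (exk k)).
have sH k : size (H k) = k by apply/eqP; exact: (xchooseP (exk k)).
have LH n : L n = H (size (L n)) by apply: growth_eq_of_size; rewrite sH.
exists H; split=> //.
- by apply: size0nil; rewrite sH.
- move=> k; pose p := xchoose (exk k.+1).
  have Hp : size (L p) = k.+1 := sH k.+1.
  have [n [np Hn _ _]] := @size_growth_hit p k ltac:(by rewrite Hp).
  have := growth_suffix (ltnW np); rewrite Hp Hn subSnn (LH n) Hn -/(H k.+1).
  by move=> ->; case: (H k.+1) (sH k.+1) => [|d t] // _; exists d; rewrite /= drop0.
- move=> k; have [N HN] := size_growth_unbounded k.+1.
  have [n [_ Hn gn Hn1]] := size_growth_hit (HN N (leqnn N)).
  by exists n; split; [rewrite -Hn; exact: size_growth_le | | rewrite LH Hn1].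
- exact: size_growth_unbounded.
Qed.
End StutteringGrowth.

(* A two-player game: at position x Adam chooses a move m enabled at x, Eve
   answers with a direction d and the play proceeds to position next m d.
   Adam wins an infinite play when its sequence of positions satisfies Win,
   a prefix-independent objective closed under interleavings.  Eve may be
   constrained by a partial positional restriction D : M -> option dir. *)
Section HalfPositional.
Variables (X M : Type) (enabled : X -> M -> Prop) (next : M -> dir -> X).
Variable Win : (nat -> X) -> Prop.
Hypothesis Win_shift : forall (p : nat -> X) c, Win (fun k => p (k + c)) <-> Win p.
Hypothesis Win_interleaves : forall p q1 q2 : nat -> X,
  interleaves p q1 q2 -> Win q1 -> Win q2 -> Win p.

Lemma Win_ext (p q : nat -> X) : (forall n, p n = q n) -> Win q -> Win p.
Proof. by move=> E Wq; exact: (Win_interleaves (interleaves_self E) Wq Wq). Qed.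

Definition allowed (D : M -> option dir) (m : M) (d : dir) : Prop :=
  if D m is Some d' then d = d' else True.

(* Adam's strategies map the history of Eve's directions (most recent first)
   to a move; position x tau u is the position reached after history u. *)
Definition position (x : X) (tau : seq dir -> M) (u : seq dir) : X :=
  if u is d :: u' then next (tau u') d else x.

Fixpoint consistent (D : M -> option dir) (tau : seq dir -> M) (u : seq dir) : Prop :=
  if u is d :: u' then consistent D tau u' /\ allowed D (tau u') d else True.

Definition follows D tau (h : nat -> seq dir) : Prop :=
  forall n, exists d, h n.+1 = d :: h n /\ allowed D (tau (h n)) d.

Definition legal D tau (x : X) : Prop :=
  forall u, consistent D tau u -> enabled (position x tau u) (tau u).

Definition winning D tau (x : X) : Prop :=
  forall h, h 0 = [::] -> follows D tau h -> Win (fun n => position x tau (h n)).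

Definition adam_wins D (x : X) : Prop := exists tau, legal D tau x /\ winning D tau x.

Definition eve_wins (P : M -> dir) (x : X) : Prop :=
  forall (ms : nat -> M) (xs : nat -> X), xs 0 = x ->
  (forall i, enabled (xs i) (ms i) /\ xs i.+1 = next (ms i) (P (ms i))) -> ~ Win xs.

Definition half_positional D : Prop :=
  exists P, (forall m, allowed D m (P m)) /\ forall x, eve_wins P x \/ adam_wins D x.

Lemma consistent_drop D tau u k : consistent D tau u -> consistent D tau (drop k u).
Proof. by elim: u k => [|d u IH] [|k] //= [/IH]. Qed.

Lemma follows_consistent D tau h :
  consistent D tau (h 0) -> follows D tau h -> forall n, consistent D tau (h n).
Proof. by move=> c0 st; elim=> // n IH; have [d [-> a]] := st n. Qed.

Lemma consistent_follows D tau h : (forall n, exists d, h n.+1 = d :: h n) ->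
  (forall n, consistent D tau (h n)) -> follows D tau h.
Proof.
move=> G C n; have [d E] := G n; exists d; split=> //.
by have := C n.+1; rewrite E => -[].
Qed.

(* By prefix independence, a winning strategy also wins every play that starts
   from an arbitrary consistent history: prepend the suffixes of h 0 to obtain
   a play from the empty history. *)
Lemma winning_from D tau x : winning D tau x ->
  forall h, consistent D tau (h 0) -> follows D tau h ->
  Win (fun n => position x tau (h n)).
Proof.
move=> W h c0 st.
set u := h 0; set L := size u.
pose H n := if n <= L then drop (L - n) u else h (n - L).
have H0 : H 0 = [::] by rewrite /H leq0n subn0 drop_size.
have HS : follows D tau H.
  move=> n; rewrite /H.
  have [hn|[hn|hn]] : n < L \/ L < n \/ n = L by lia.
  - rewrite hn (ltnW hn).
    have hl : L - n.+1 < size u by rewrite /L; lia.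
    exists (nth DL u (L - n.+1)).
    have E : L - n = (L - n.+1).+1 by lia.
    have Hd := drop_nth DL hl.
    rewrite E -Hd; split=> //.
    by move: (consistent_drop (L - n.+1) c0); rewrite Hd => -[].
  - have -> : (n.+1 <= L) = false by lia.
    have -> : (n <= L) = false by lia.
    have [d [E a]] := st (n - L); exists d; split=> //.
    by have -> : n.+1 - L = (n - L).+1 by lia.
  - by subst n; rewrite leqnn ltnn subnn drop0 subSnn; exact: st 0.
apply: Win_ext (iffRL (Win_shift _ L) (W H H0 HS)) => k.
rewrite /H; case: k => [|k]; first by rewrite add0n leqnn subnn drop0.
have -> : (k.+1 + L <= L) = false by lia.
by rewrite addnK.
Qed.

Lemma winning_eventually D tau y (c : nat -> seq dir) (p : nat -> X) N :
  winning D tau y -> (forall n, consistent D tau (c n)) ->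
  (forall n, N <= n -> exists d, c n.+1 = d :: c n) ->
  (forall n, N <= n -> p n = position y tau (c n)) -> Win p.
Proof.
move=> W C G E; apply/(Win_shift _ N).
have st : follows D tau (fun k => c (k + N)).
  by apply: consistent_follows => [k|k]; [rewrite addSn; apply: G; lia | apply: C].
apply: Win_ext (winning_from W (C N) st) => k /=; apply: E; lia.
Qed.

Lemma winning_stuttering D tau y (L : nat -> seq dir) (grows : nat -> bool) :
  winning D tau y -> L 0 = [::] ->
  (forall n, exists d, L n.+1 = if grows n.+1 then d :: L n else L n) ->
  (forall N, exists n, N <= n /\ grows n) ->
  (forall n, consistent D tau (L n)) ->
  exists H : nat -> seq dir, [/\ Win (fun k => position y tau (H k)),
      (forall n, L n = H (size (L n))),
      (forall k, exists n, [/\ k <= n, grows n.+1 & L n.+1 = H k.+1]) &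
      (forall K, exists N, forall n, N <= n -> K <= size (L n))].
Proof.
move=> W L0 L_step grows_inf C.
have [H [H0 H_step LH hit unb]] := growth_reindex L0 L_step grows_inf.
exists H; split=> //; apply: W => //; apply: consistent_follows => // -[|k].
  by rewrite H0.
by have [n [_ _ <-]] := hit k.
Qed.

Definition fix_at (D : M -> option dir) (m0 : M) (o : option dir) : M -> option dir :=
  fun m => if excluded_middle_informative (m = m0) then o else D m.

Lemma fix_at_eq D m0 o : fix_at D m0 o m0 = o.
Proof. by rewrite /fix_at; case: excluded_middle_informative. Qed.

Lemma fix_at_neq D m0 o m : m <> m0 -> fix_at D m0 o m = D m.
Proof. by rewrite /fix_at; case: excluded_middle_informative. Qed.

Lemma allowed_fix_at_neq D m0 o m d :
  m <> m0 -> allowed (fix_at D m0 o) m d <-> allowed D m d.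
Proof. by move=> ne; rewrite /allowed fix_at_neq. Qed.

Lemma allowed_of_fix_at D m0 o m d :
  D m0 = None -> allowed (fix_at D m0 o) m d -> allowed D m d.
Proof.
move=> N; case: (excluded_middle_informative (m = m0)) => [->|ne].
  by rewrite /allowed N.
by move/(allowed_fix_at_neq _ _ _ ne).
Qed.

(* Base case: if D fixes every choice of Eve, then a play won by Adam against
   the strategy D itself yields a winning strategy of Adam against D (Adam
   replays the moves of that play, which is the only play left). *)
Lemma half_positional_total D : (forall m, D m <> None) -> half_positional D.
Proof.
move=> HD.
pose P m := if D m is Some d then d else DL.
exists P; split; first by move=> m; rewrite /allowed /P; case: (D m).
move=> x; case: (classic (eve_wins P x)) => eve_loses; first by left.
right.
have [ms [xs [h0 [hp hc]]]] : exists ms xs, xs 0 = x /\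
   (forall i, enabled (xs i) (ms i) /\ xs i.+1 = next (ms i) (P (ms i))) /\ Win xs.
  apply: NNPP => no_play; apply: eve_loses => ms xs h0 hp hc; apply: no_play.
  by exists ms, xs.
pose tau (u : seq dir) := ms (size u).
have Hpos u : consistent D tau u -> position x tau u = xs (size u).
  elim: u => [|d u IH] //= [cu al].
  have := hp (size u) => -[_ ->]; rewrite /tau.
  move: al; rewrite /allowed /P /tau; case E: (D (ms (size u))) => [d'|] //.
    by move=> ->.
  by have := HD (ms (size u)); rewrite E.
exists tau; split.
  by move=> u cu; rewrite Hpos //; exact: (hp _).1.
move=> h h0' st.
have cs : forall n, consistent D tau (h n) by apply: follows_consistent => //; rewrite h0'.
have sz n : size (h n) = n.
  by elim: n => [|n IH]; [rewrite h0' | have [d [-> _]] := st n; rewrite /= IH].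
by apply: Win_ext hc => n; rewrite Hpos // sz.
Qed.

Section FixedChoice.
Variables (D : M -> option dir) (m0 : M) (e : dir) (P : M -> dir).
Hypothesis m0_free : D m0 = None.
Let De := fix_at D m0 (Some e).
Hypothesis P_allowed : forall m, allowed De m (P m).

(* If P wins after Eve's choice e at m0, a strategy of Adam that wins against
   De never plays m0 along De-consistent histories: otherwise Eve could
   continue with P from there. *)
Lemma winning_avoids_fixed tau x : eve_wins P (next m0 e) ->
  legal De tau x -> winning De tau x ->
  forall u, consistent De tau u -> tau u <> m0.
Proof.
move=> P_wins_after V W u cu Eu.
pose ext k := iter k (fun w => P (tau w) :: w) u.
have st : follows De tau ext by move=> n; exists (P (tau (ext n))); split.
have cs := follows_consistent (h := ext) cu st.
have := winning_from W cu st => /(iffRL (Win_shift _ 1)).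
apply: (P_wins_after (fun k => tau (ext (k + 1)))).
  rewrite /= /ext /= Eu; congr next.
  by have := P_allowed m0; rewrite /allowed /De fix_at_eq.
move=> i; split; first by apply: V; apply: cs.
by rewrite !addn1.
Qed.

Lemma adam_wins_unfix x : eve_wins P (next m0 e) -> adam_wins De x -> adam_wins D x.
Proof.
move=> P_wins_after [tau [V W]].
have never := winning_avoids_fixed P_wins_after V W.
have cD u : consistent D tau u -> consistent De tau u.
  elim: u => [|d u IH] //= [cu al]; have cu' := IH cu; split=> //.
  by apply/(allowed_fix_at_neq _ _ _ (never _ cu')).
exists tau; split; first by move=> u /cD /V.
move=> h h0 st; apply: W => //; apply: consistent_follows.
  by move=> n; have [d [E _]] := st n; exists d.
elim=> [|n IH]; first by rewrite h0.
have [d [-> al]] := st n; split=> //.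
by apply/(allowed_fix_at_neq _ _ _ (never _ IH)).
Qed.

Lemma half_positional_fixed_winning :
  (forall x, eve_wins P x \/ adam_wins De x) -> eve_wins P (next m0 e) ->
  half_positional D.
Proof.
move=> P_half P_wins_after; exists P; split.
  by move=> m; apply: (allowed_of_fix_at m0_free (P_allowed m)).
by move=> x; case: (P_half x) => [|/(adam_wins_unfix P_wins_after)]; [left | right].
Qed.
End FixedChoice.

(* From a strategy tau2 winning from next m0 DR, the strategy root_at m0 tau2
   first plays m0 and, after Eve's forced answer DR, continues as tau2. *)
Section RootedStrategy.
Variables (D2 : M -> option dir) (m0 : M) (tau2 : seq dir -> M).
Hypothesis D2_m0 : D2 m0 = Some DR.

Definition root_at (w : seq dir) : M :=
  if w is [::] then m0 else tau2 (take (size w).-1 w).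

Lemma root_at_rcons w : root_at (rcons w DR) = tau2 w.
Proof. by case: w => [|d w] //=; rewrite size_rcons /= -cats1 take_size_cat. Qed.

Lemma consistent_root_at_rcons w :
  consistent D2 root_at (rcons w DR) <-> consistent D2 tau2 w.
Proof.
elim: w => [|d w IH] /=; first by rewrite /allowed D2_m0.
by rewrite root_at_rcons; split=> -[/IH ? ?].
Qed.

Lemma position_root_at_rcons z w :
  position z root_at (rcons w DR) = position (next m0 DR) tau2 w.
Proof. by case: w => [|d w] //=; rewrite root_at_rcons. Qed.

Lemma consistent_root_at_nonempty w :
  consistent D2 root_at w -> w <> [::] -> exists w', w = rcons w' DR.
Proof.
elim: w => [|d w IH] //= [cw al] _.
case: w IH cw al => [|d' w] IH cw al.
  by exists [::]; move: al; rewrite /= /allowed D2_m0 => ->.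
have [w' E] := IH cw ltac:(done).
by exists (d :: w'); rewrite E.
Qed.

Lemma legal_root_at z : legal D2 tau2 (next m0 DR) ->
  forall w, consistent D2 root_at w -> w <> [::] ->
  enabled (position z root_at w) (root_at w).
Proof.
move=> V w cw ne; have [w' E] := consistent_root_at_nonempty cw ne; subst w.
rewrite root_at_rcons position_root_at_rcons; apply: V; exact/consistent_root_at_rcons.
Qed.

Lemma winning_root_at z : winning D2 tau2 (next m0 DR) -> winning D2 root_at z.
Proof.
move=> W h h0 st.
have cs := follows_consistent (ltac:(by rewrite h0) : consistent D2 root_at (h 0)) st.
pose hh n := take (size (h n.+1)).-1 (h n.+1).
have hhE n : h n.+1 = rcons (hh n) DR.
  have [w E] := consistent_root_at_nonempty (cs n.+1) ltac:(by have [d [-> _]] := st n).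
  by rewrite /hh E size_rcons /= -cats1 take_size_cat // cats1.
have hh0 : hh 0 = [::] by rewrite /hh; have [d [-> _]] := st 0; rewrite h0.
have sth : follows D2 tau2 hh.
  move=> k; have [d [E al]] := st k.+1.
  exists d; split; first by apply: (rcons_injl DR); rewrite -hhE E hhE.
  by move: al; rewrite hhE root_at_rcons.
apply/(Win_shift _ 1); apply: Win_ext (W hh hh0 sth) => n.
by rewrite addn1 hhE position_root_at_rcons.
Qed.
End RootedStrategy.

(* The combined strategy runs tau1 and tau2 on two separate histories and
   switches to the history selected by Eve's answer whenever m0 is played.
   Every resulting play interleaves a play of tau1 and a play of tau2. *)
Section Combination.
Variables (D : M -> option dir) (m0 : M) (tau1 tau2 : seq dir -> M) (x : X).
Let D1 := fix_at D m0 (Some DL).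
Let D2 := fix_at D m0 (Some DR).
Hypothesis legal1 : legal D1 tau1 x.
Hypothesis winning1 : winning D1 tau1 x.
Hypothesis tau2_root : tau2 [::] = m0.
Hypothesis legal2 : forall w, consistent D2 tau2 w -> w <> [::] ->
  enabled (position x tau2 w) (tau2 w).
Hypothesis winning2 : winning D2 tau2 x.

(* A state (mode, a, b): mode selects tau1 on history a or tau2 on history b. *)
Definition comb_move (s : bool * seq dir * seq dir) : M :=
  let: (mode, a, b) := s in if mode then tau1 a else tau2 b.

Definition comb_step (d : dir) (s : bool * seq dir * seq dir) : bool * seq dir * seq dir :=
  let: (mode, a, b) := s in
  if (if excluded_middle_informative (comb_move s = m0)
      then (if d is DL then true else false) else mode)
  then (true, d :: a, b) else (false, a, d :: b).

Fixpoint comb_state (u : seq dir) : bool * seq dir * seq dir :=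
  if u is d :: u' then comb_step d (comb_state u') else (true, [::], [::]).

Definition comb_strategy (u : seq dir) : M := comb_move (comb_state u).

(* Invariant of the combined play at position p: both component histories are
   consistent, p is the current position of the active component, and the
   inactive component is waiting at m0. *)
Definition comb_inv (s : bool * seq dir * seq dir) (p : X) : Prop :=
  let: (mode, a, b) := s in
  [/\ consistent D1 tau1 a, consistent D2 tau2 b &
  (if mode then position x tau1 a = p /\ tau2 b = m0
   else [/\ b <> [::], position x tau2 b = p & tau1 a = m0])].

Lemma comb_inv_step s p d : comb_inv s p -> allowed D (comb_move s) d ->
  comb_inv (comb_step d s) (next (comb_move s) d).
Proof.
case: s => [[mode a] b]; rewrite /comb_inv /comb_step /comb_move => -[c1 c2 H] al.
case: excluded_middle_informative => [E|NE].
- have ta : tau1 a = m0 by case: mode E H al => /= E H; [rewrite E | case: H].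
  have tb : tau2 b = m0 by case: mode E H al => /= E H; [case: H | rewrite E].
  rewrite /= E.
  case: d al => al; split=> //=.
  + by split=> //; rewrite /allowed ta /D1 fix_at_eq.
  + by rewrite ta.
  + by split=> //; rewrite /allowed tb /D2 fix_at_eq.
  + by rewrite tb.
- case: mode NE H al => NE H al /=; split=> //=.
  + by split=> //; apply/(allowed_fix_at_neq _ _ _ NE).
  + by case: H.
  + by split=> //; apply/(allowed_fix_at_neq _ _ _ NE).
  + by case: H => _ _ ->.
Qed.

Lemma comb_inv_all u : consistent D comb_strategy u ->
  comb_inv (comb_state u) (position x comb_strategy u).
Proof.
elim: u => [|d u IH]; first by rewrite /comb_inv /= tau2_root.
by move=> [/IH I al]; exact: (comb_inv_step I al).
Qed.

Lemma comb_legal : legal D comb_strategy x.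
Proof.
move=> u /comb_inv_all; rewrite /comb_strategy.
case: (comb_state u) => [[mode a] b] /= [c1 c2 H].
by case: mode H => [[<- _]|[ne <- _]]; [exact: legal1 | exact: legal2].
Qed.

Section CombinedPlay.
Variable h : nat -> seq dir.
Hypothesis h0 : h 0 = [::].
Hypothesis h_follows : follows D comb_strategy h.
Let mode n := (comb_state (h n)).1.1.
Let hist1 n := (comb_state (h n)).1.2.
Let hist2 n := (comb_state (h n)).2.
Let play n := position x comb_strategy (h n).

Lemma comb_hist0 : hist1 0 = [::] /\ hist2 0 = [::].
Proof. by rewrite /hist1 /hist2 h0. Qed.

Lemma comb_hist_step n : exists d,
  hist1 n.+1 = (if mode n.+1 then d :: hist1 n else hist1 n) /\
  hist2 n.+1 = (if mode n.+1 then hist2 n else d :: hist2 n).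
Proof.
have [d [E _]] := h_follows n; exists d; rewrite /hist1 /hist2 /mode E /=.
by case: (comb_state (h n)) => [[m' a'] b']; rewrite /comb_step; case: ifP.
Qed.

Lemma comb_play_inv n : comb_inv (comb_state (h n)) (play n).
Proof. by apply: comb_inv_all; apply: follows_consistent => //; rewrite h0. Qed.

Lemma comb_hist_consistent n :
  consistent D1 tau1 (hist1 n) /\ consistent D2 tau2 (hist2 n).
Proof.
by have := comb_play_inv n; rewrite /hist1 /hist2; case: (comb_state (h n)) => [[m' a'] b'] [].
Qed.

Lemma comb_play_mode n :
  play n = if mode n then position x tau1 (hist1 n) else position x tau2 (hist2 n).
Proof.
have := comb_play_inv n; rewrite /hist1 /hist2 /mode.
by case: (comb_state (h n)) => [[[] a'] b'] [_ _] /= => [[]|[]].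
Qed.

(* If both modes recur infinitely often, the play interleaves a play of tau1
   with a play of tau2, both won by Adam. *)
Lemma comb_play_interleaved :
  (forall N, exists n, N <= n /\ mode n) -> (forall N, exists n, N <= n /\ ~~ mode n) ->
  Win play.
Proof.
move=> inf1 inf2.
have step1 n : exists d, hist1 n.+1 = if mode n.+1 then d :: hist1 n else hist1 n.
  by have [d [E _]] := comb_hist_step n; exists d.
have step2 n : exists d, hist2 n.+1 = if ~~ mode n.+1 then d :: hist2 n else hist2 n.
  by have [d [_ E]] := comb_hist_step n; exists d; rewrite if_neg.
have [H1 [W1 LH1 hit1 unb1]] := winning_stuttering winning1 comb_hist0.1 step1 inf1
  (fun n => (comb_hist_consistent n).1).
have [H2 [W2 LH2 hit2 unb2]] := winning_stuttering winning2 comb_hist0.2 step2 inf2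
  (fun n => (comb_hist_consistent n).2).
apply: (Win_interleaves _ W1 W2).
exists (fun n => size (hist1 n)), (fun n => size (hist2 n)); split.
- move=> n; rewrite comb_play_mode.
  by case: (mode n); [left; rewrite -LH1 | right; rewrite -LH2].
- move=> K; have [N1 HN1] := unb1 K; have [N2 HN2] := unb2 K.
  by exists (maxn N1 N2) => n Hn; split; [apply: HN1 | apply: HN2]; lia.
- move=> k; have [n [kn g E]] := hit1 k; exists n.+1; split; first lia.
  by rewrite comb_play_mode g E.
- move=> k; have [n [kn g E]] := hit2 k; exists n.+1; split; first lia.
  by rewrite comb_play_mode (negbTE g) E.
Qed.
(* Otherwise the play eventually stays in one mode, and is then a tail of a
   play of the corresponding component strategy. *)
Lemma comb_play_win : Win play.
Proof.
case: (classic (forall N, exists n, N <= n /\ mode n)) => [inf1|/eventually_not [N HN]].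
  case: (classic (forall N, exists n, N <= n /\ ~~ mode n)) => [inf2|/eventually_not [N HN]].
    exact: comb_play_interleaved.
  apply: (winning_eventually winning1 (fun n => (comb_hist_consistent n).1) (N := N)).
  - move=> n Nn; have [d [E _]] := comb_hist_step n; exists d.
    by rewrite E -[mode _]negbK HN //; lia.
  - by move=> n Nn; rewrite comb_play_mode -[mode _]negbK HN.
apply: (winning_eventually winning2 (fun n => (comb_hist_consistent n).2) (N := N)).
- move=> n Nn; have [d [_ E]] := comb_hist_step n; exists d.
  by rewrite E (negbTE (HN _ _)) //; lia.
- by move=> n Nn; rewrite comb_play_mode (negbTE (HN _ Nn)).
Qed.
End CombinedPlay.

Lemma comb_adam_wins : adam_wins D x.
Proof.
exists comb_strategy; split; first exact: comb_legal.
by move=> h h0 st; exact: comb_play_win h0 st.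
Qed.
End Combination.

(* Half-positional determinacy, by induction on a list covering the moves at
   which Eve is still free.  At a free move m0, the induction hypothesis gives
   strategies PL, PR for the restrictions fixing DL, resp. DR, at m0.  If PR
   wins from next m0 DR it is good for D; otherwise Adam wins from next m0 DR
   against the DR-restriction, and PL is good for D: wherever Adam wins against
   PL's restriction, combining his two strategies wins against D. *)
Lemma half_positional_of_finite (l : seq M) :
  forall D, (forall m, D m = None -> List.In m l) -> half_positional D.
Proof.
elim: l => [|m0 l IH] D HD.
  by apply: half_positional_total => m E; exact: HD m E.
case E: (D m0) => [e|].
  apply: IH => m Em; case: (HD m Em) => // Hm; subst m.
  by rewrite E in Em.
have Hfix o m : fix_at D m0 (Some o) m = None -> List.In m l.
  case: (excluded_middle_informative (m = m0)) => [->|ne]; first by rewrite fix_at_eq.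
  by rewrite fix_at_neq // => /HD [Hm|] //; case: ne.
have [PL [HPL QL]] := IH _ (Hfix DL).
have [PR [HPR QR]] := IH _ (Hfix DR).
case: (classic (eve_wins PR (next m0 DR))) => ew.
  exact: (half_positional_fixed_winning E HPR QR ew).
have [tau2 [V2 W2]] : adam_wins (fix_at D m0 (Some DR)) (next m0 DR).
  by case: (QR (next m0 DR)).
exists PL; split; first by move=> m; apply: (allowed_of_fix_at E (HPL m)).
move=> x; case: (QL x) => [|[tau1 [V1 W1]]]; [by left | right].
have root : fix_at D m0 (Some DR) m0 = Some DR by rewrite fix_at_eq.
apply: (@comb_adam_wins D m0 tau1 (root_at m0 tau2) x V1 W1 erefl).
  exact: legal_root_at root x V2.
exact: winning_root_at root x W2.
Qed.

Theorem half_positional_determinacy :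
  (exists l : seq M, forall m, List.In m l) ->
  exists P : M -> dir, forall x, eve_wins P x \/ adam_wins (fun _ => None) x.
Proof.
case=> l Hl; have [P [_ HP]] := @half_positional_of_finite l (fun _ => None) (fun m _ => Hl m).
by exists P.
Qed.
End HalfPositional.

Definition both_accepting (SA SB : Type) (prA : SA -> nat) (prB : SB -> nat)
  (p : nat -> SA * SB) : Prop :=
  parity_accepting (fun n => prA (p n).1) /\ parity_accepting (fun n => prB (p n).2).

Lemma both_accepting_shift (SA SB : Type) (prA : SA -> nat) (prB : SB -> nat) p c :
  both_accepting prA prB (fun k => p (k + c)) <-> both_accepting prA prB p.
Proof.
rewrite /both_accepting (parity_accepting_shift (fun n => prA (p n).1)).
by rewrite (parity_accepting_shift (fun n => prB (p n).2)).
Qed.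

Lemma both_accepting_interleaves (SA SB : Type) (prA : SA -> nat) (prB : SB -> nat) p q1 q2 :
  interleaves p q1 q2 -> both_accepting prA prB q1 -> both_accepting prA prB q2 ->
  both_accepting prA prB p.
Proof.
move=> I [A1 B1] [A2 B2]; split.
  exact: parity_accepting_interleaves (interleaves_map (fun s => prA s.1) I) A1 A2.
exact: parity_accepting_interleaves (interleaves_map (fun s => prB s.2) I) B1 B2.
Qed.

Section ProductGame.
Variables (Sigma : finType) (A B : npta Sigma).

Definition prod_enabled (p : state A * state B) (m : trans A * trans B) : Prop :=
  [/\ tsrc m.1 = p.1, tsrc m.2 = p.2,
      delta (tsrc m.1) (tlet m.1) (tL m.1) (tR m.1),
      delta (tsrc m.2) (tlet m.2) (tL m.2) (tR m.2) & tlet m.1 = tlet m.2].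

Definition prod_next (m : trans A * trans B) (d : dir) : state A * state B :=
  if d is DL then (tL m.1, tL m.2) else (tR m.1, tR m.2).

Definition prod_win : (nat -> state A * state B) -> Prop :=
  both_accepting (@prio _ A) (@prio _ B).

Lemma trans_pairs_finite : exists l : seq (trans A * trans B), forall m, List.In m l.
Proof.
pose enc (q : (state A * Sigma * state A * state A) * (state B * Sigma * state B * state B)) :=
  (@Trans Sigma A q.1.1.1.1 q.1.1.1.2 q.1.1.2 q.1.2,
   @Trans Sigma B q.2.1.1.1 q.2.1.1.2 q.2.1.2 q.2.2).
pose codes := enum {: (state A * Sigma * state A * state A) * (state B * Sigma * state B * state B)}.
exists [seq enc q | q <- codes] => -[[sa la La Ra] [sb lb Lb Rb]].
have : ((sa, la, La, Ra), (sb, lb, Lb, Rb)) \in codes by rewrite mem_enum.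
elim: codes => [|q s IH] //=; rewrite in_cons => /orP [/eqP <-|/IH]; by [left | right].
Qed.

Lemma eve_wins_product (P : trans A * trans B -> dir) :
  eve_wins prod_enabled prod_next prod_win P (init A, init B) ->
  forall (b : nat -> Sigma * dir) (dA : nat -> trans A) (dB : nat -> trans B),
    delta_seq b dA -> delta_seq b dB -> (forall i, P (dA i, dB i) = (b i).2) ->
    trans_seq_rejecting dA \/ trans_seq_rejecting dB.
Proof.
move=> Hev b dA dB [hA0 hA] [hB0 hB] HPb.
apply: NNPP => nn.
have accA : trans_seq_accepting dA by apply: NNPP => na; apply: nn; left.
have accB : trans_seq_accepting dB by apply: NNPP => na; apply: nn; right.
apply: (Hev (fun i => (dA i, dB i)) (fun i => (tsrc (dA i), tsrc (dB i)))).
- by rewrite /= hA0 hB0.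
- move=> i; have [dlA [lA sA]] := hA i; have [dlB [lB sB]] := hB i.
  split; first by split=> //=; rewrite lA lB.
  by rewrite /= HPb sA sB /prod_next; case: (b i).2.
- by split.
Qed.

(* A winning strategy of Adam in the unrestricted product game builds a tree,
   letter by letter, together with accepting runs of A and B on it. *)
Lemma adam_wins_product :
  adam_wins prod_enabled prod_next prod_win (fun _ => None) (init A, init B) ->
  exists t : tree Sigma, accepts A t /\ accepts B t.
Proof.
move=> [tau [V W]].
pose pos w := position prod_next (init A, init B) tau (rev w).
have consistent_all u : consistent (fun _ => None) tau u by elim: u => //= d u ->.
have Ven w : prod_enabled (pos w) (tau (rev w)) by apply: V.
have Wb (beta : nat -> dir) : prod_win (fun n => pos (mkseq beta n)).
  apply: W => // n; exists (beta n); split=> //.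
  by rewrite /= mkseqS rev_rcons.
exists (fun w => tlet (tau (rev w)).1); split.
- exists (fun w => (pos w).1); split; last by move=> beta; case: (Wb beta).
  split=> // w; rewrite /pos !rev_rcons /=.
  by case: (Ven w) => <- _ ? _ _.
- exists (fun w => (pos w).2); split; last by move=> beta; case: (Wb beta).
  split=> // w; rewrite /pos !rev_rcons /=.
  by case: (Ven w) => _ <- _ ? ->.
Qed.
End ProductGame.

Unset Implicit Arguments.

Theorem mainTheorem4 (Sigma : finType) (A B : npta Sigma) :
  all_productive A -> all_productive B ->
  (forall t : tree Sigma, ~ (accepts A t /\ accepts B t)) ->
  exists P : trans A -> trans B -> dir,
    forall (b : nat -> Sigma * dir) (dA : nat -> trans A) (dB : nat -> trans B),
      delta_seq b dA -> delta_seq b dB ->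
      (forall i, P (dA i) (dB i) = (b i).2) ->
      trans_seq_rejecting dA \/ trans_seq_rejecting dB.
Proof.
move=> _ _ disjoint.
have [P HP] := half_positional_determinacy (@prod_enabled Sigma A B) (@prod_next Sigma A B)
  (@both_accepting_shift _ _ (@prio _ A) (@prio _ B))
  (@both_accepting_interleaves _ _ (@prio _ A) (@prio _ B))
  (trans_pairs_finite A B).
case: (HP (init A, init B)) => [eve | adam].
  by exists (fun a b => P (a, b)); exact: eve_wins_product eve.
by have [t Ht] := adam_wins_product adam; case: (disjoint t).
Qed.
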